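(* Let $\mathcal{A}$ be an alphabet with at least three letters. Then every steady word over $\mathcal{A}$ is bifurcate over $\mathcal{A}$.
   Context: A factor of a word $W$ is a contiguous subword. A square is a nonempty word of the form $XX$; a word is square-free if it has no factor that is a square. For a word $W$ of length $n$ and $0\le i\le n$, let $P_i(W)$ and $S_i(W)$ be the prefix and suffix of $W$ of length $i$. An extension of $W$ at position $i$ (over $\mathcal{A}$) is a word $P_i(W)\mathtt{x}S_{n-i}(W)$ with $\mathtt{x}\in\mathcal{A}$. A square-free word $W$ is steady if every word obtained from $W$ by deleting exactly one letter (at any position) is square-free. A square-free word $W$ of length $n$ is bifurcate over $\mathcal{A}$ if for every position $i\in\{0,1,\dots,n\}$ there is a letter $\mathtt{x}\in\mathcal{A}$ such that the extension $P_i(W)\mathtt{x}S_{n-i}(W)$ is square-free. *)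

From mathcomp Require Import all_boot.
Set Implicit Arguments. Unset Strict Implicit. Unset Printing Implicit Defensive.

Section Words.
Variable A : eqType.

Definition factor (u w : seq A) : Prop := exists p s, w = p ++ u ++ s.

Definition square (u : seq A) : Prop := exists x : seq A, x <> [::] /\ u = x ++ x.

Definition square_free (w : seq A) : Prop := forall u, factor u w -> ~ square u.

Definition pref (i : nat) (w : seq A) : seq A := take i w.
Definition suff (i : nat) (w : seq A) : seq A := drop (size w - i) w.

Definition extension (w : seq A) (i : nat) (x : A) : seq A :=
  pref i w ++ x :: suff (size w - i) w.

Definition delete_at (w : seq A) (i : nat) : seq A := take i w ++ drop i.+1 w.

Definition steady (w : seq A) : Prop :=
  square_free w /\ forall i, i < size w -> square_free (delete_at w i).

Definition bifurcate (w : seq A) : Prop :=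
  square_free w /\ forall i, i <= size w -> exists x : A, square_free (extension w i x).

End Words.

From mathcomp Require Import all_boot.
From mathcomp Require Import zify.

Set Implicit Arguments.
Unset Strict Implicit.
Unset Printing Implicit Defensive.

(* Insert at position i a letter x differing from both neighbours of the gap;
   three letters make this possible.  A square of the extension either avoids
   x, and is then a square of w, or contains x.  It cannot be a square xx of
   length 2, so its halves have length at least 2, and deleting x together with
   its counterpart in the other half leaves a square in w with one letter
   deleted, which steadiness forbids. *)

Ltac case_innermost_ifs :=
  repeat match goal with
  | |- context [if ?b then _ else _] =>
      lazymatch b with context [if _ then _ else _] => fail | _ => case: (boolP b) => ? end
  end.

Section SquareOccurrences.
Variables (A : eqType) (x0 : A).
Implicit Types (s : seq A) (o m p : nat).

Definition square_at s o m : Prop :=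
  [/\ 0 < m, o + m + m <= size s
    & forall k, o <= k < o + m -> nth x0 s k = nth x0 s (k + m)].

Lemma square_at_nth s o m i j :
  square_at s o m -> o <= i < o + m -> j = i + m -> nth x0 s i = nth x0 s j.
Proof. by case=> _ _ sq i_in ->; apply: sq. Qed.

Lemma square_at_not_square_free s o m : square_at s o m -> ~ square_free s.
Proof.
case=> m0 sz sq sf; pose y := take m (drop o s).
have size_y : size y = m by rewrite size_takel // size_drop; lia.
have drop_o : drop o s = y ++ y ++ drop (o + m + m) s.
  rewrite -{1}(cat_take_drop m (drop o s)) drop_drop -/y; congr (_ ++ _).
  rewrite -(cat_take_drop m (drop (m + o) s)) drop_drop; congr (_ ++ _).
    apply: (@eq_from_nth _ x0) => [|k].
      by rewrite size_y size_takel // size_drop; lia.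
    rewrite size_takel ?size_drop; last lia.
    by move=> km; rewrite !nth_take // !nth_drop (sq (o + k)); [congr nth|]; lia.
  by rewrite (_ : m + (m + o) = o + m + m) //; lia.
apply: (sf (y ++ y)); last by exists y; split=> // y_nil; move: m0; rewrite -size_y y_nil.
by exists (take o s), (drop (o + m + m) s); rewrite -catA -drop_o cat_take_drop.
Qed.

Lemma square_free_of_no_square_at s :
  (forall o m, ~ square_at s o m) -> square_free s.
Proof.
move=> nosq u [p [q s_eq]] [y [y0 u_eq]]; subst s u.
apply: (nosq (size p) (size y)); split=> [|| k /andP[pk ky]].
- by rewrite lt0n size_eq0; apply/eqP.
- by rewrite !size_cat; lia.
rewrite -(subnKC pk) -addnA !nth_cat !ltnNge !leq_addr /= !addKn.
have ty : k - size p < size y by lia.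
by rewrite size_cat -!ltnNge ltn_add2r ty (ltn_addr _ ty) ltnNge leq_addl /= addnK.
Qed.

Lemma size_delete_at s p : p < size s -> size (delete_at s p) = (size s).-1.
Proof. by move=> ps; rewrite size_cat size_takel ?size_drop; lia. Qed.

Lemma nth_delete_at s p k : p < size s ->
  nth x0 (delete_at s p) k = nth x0 s (if k < p then k else k.+1).
Proof.
move=> ps; rewrite nth_cat size_takel; last lia.
by case: ltnP => kp; [rewrite nth_take | rewrite nth_drop; congr nth; lia].
Qed.

Lemma delete_atC s i j : i < j < size s ->
  delete_at (delete_at s j) i = delete_at (delete_at s i) j.-1.
Proof.
move=> /andP[ij js]; apply: (@eq_from_nth _ x0) => [|k].
  by rewrite !size_delete_at ?size_delete_at //; lia.
rewrite size_delete_at ?size_delete_at // => [kl|]; last lia.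
rewrite !nth_delete_at ?size_delete_at //; try lia.
by case_innermost_ifs; (congr nth; lia) || lia.
Qed.

Lemma square_at_delete_outside s o m p :
  square_at s o m -> p < size s -> (o + m + m <= p) || (p < o) ->
  exists o', square_at (delete_at s p) o' m.
Proof.
move=> sq ps out; have [m0 sz _] := sq.
case/orP: out => out; [exists o | exists o.-1];
  split; rewrite ?size_delete_at //; try lia;
  move=> k k_in; rewrite !nth_delete_at //;
  by case_innermost_ifs; (apply: square_at_nth sq _ _; lia) || lia.
Qed.

Lemma square_at_delete_pair s o m p :
  square_at s o m -> 1 < m -> o <= p < o + m ->
  square_at (delete_at (delete_at s (p + m)) p) o m.-1.
Proof.
move=> sq m_gt1 p_in; have [m0 sz _] := sq.
split; rewrite ?size_delete_at ?size_delete_at //; try lia.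
move=> k k_in; rewrite !nth_delete_at ?size_delete_at //; try lia.
by case_innermost_ifs; (apply: square_at_nth sq _ _; lia) || lia.
Qed.

Lemma square_free_of_steady_delete s n :
  n < size s -> steady (delete_at s n) ->
  (0 < n -> nth x0 s n.-1 != nth x0 s n) ->
  (n.+1 < size s -> nth x0 s n.+1 != nth x0 s n) ->
  square_free s.
Proof.
move=> ns [sfW sfD] left right; apply: square_free_of_no_square_at => o m sq.
have [m0 sz _] := sq.
have [out | inside] := boolP ((o + m + m <= n) || (n < o)).
  have [o' sqW] := square_at_delete_outside sq ns out.
  exact: square_at_not_square_free sqW sfW.
have [m_eq1 | m_neq1] := eqVneq m 1.
  subst m; have [n_eq_o | n_neq_o] := eqVneq n o.
    have eq_next : nth x0 s n.+1 = nth x0 s n by apply/esym/(square_at_nth sq); lia.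
    suff /right : n.+1 < size s by rewrite eq_next eqxx.
    lia.
  have eq_prev : nth x0 s n.-1 = nth x0 s n by apply: (square_at_nth sq); lia.
  suff /left : 0 < n by rewrite eq_prev eqxx.
  lia.
have m_gt1 : 1 < m by lia.
have [first_half | second_half] := ltnP n (o + m).
  have sqD : square_at (delete_at (delete_at s n) (n + m).-1) o m.-1.
    by rewrite -delete_atC; [apply: square_at_delete_pair sq m_gt1 _|]; lia.
  by apply: square_at_not_square_free sqD (sfD _ _); rewrite size_delete_at; lia.
have sqD : square_at (delete_at (delete_at s n) (n - m)) o m.-1.
  by rewrite -{1}(@subnK m n); [apply: square_at_delete_pair sq m_gt1 _|]; lia.
by apply: square_at_not_square_free sqD (sfD _ _); rewrite size_delete_at; lia.
Qed.

End SquareOccurrences.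

Lemma exists_notin (A : eqType) (s t : seq A) :
  uniq s -> size t < size s -> exists2 x, x \in s & x \notin t.
Proof.
move=> uniq_s small_t; have : ~~ all (mem t) s.
  by apply/negP => /allP/(uniq_leq_size uniq_s); rewrite leqNgt small_t.
by rewrite -has_predC => /hasP[y ys yt]; exists y.
Qed.

Section Extension.
Variables (A : eqType) (w : seq A) (i : nat) (x : A).
Hypothesis i_le : i <= size w.

Lemma extension_take_drop : extension w i x = take i w ++ x :: drop i w.
Proof. by rewrite /extension /pref /suff subKn. Qed.

Lemma size_extension : size (extension w i x) = (size w).+1.
Proof. by rewrite extension_take_drop size_cat /= size_takel // size_drop; lia. Qed.

Lemma delete_at_extension : delete_at (extension w i x) i = w.
Proof.
rewrite extension_take_drop /delete_at take_size_cat ?size_takel //.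
by rewrite drop_cat size_takel // ltnNge leqnSn subSnn /= drop0 cat_take_drop.
Qed.

Lemma nth_extension x0 : nth x0 (extension w i x) i = x.
Proof. by rewrite extension_take_drop nth_cat size_takel // ltnn subnn. Qed.

Lemma nth_extension_lt x0 k : k < i -> nth x0 (extension w i x) k = nth x0 w k.
Proof.
by move=> ki; rewrite -{2}delete_at_extension nth_delete_at ?ki // size_extension.
Qed.

Lemma nth_extension_ge x0 k : i <= k -> nth x0 (extension w i x) k.+1 = nth x0 w k.
Proof.
move=> ik; rewrite -{2}delete_at_extension nth_delete_at ?size_extension //.
by rewrite ltnNge ik.
Qed.

End Extension.

Theorem mainTheorem4 (A : eqType)
  (hA : exists a b c : A, [/\ a != b, a != c & b != c]) (w : seq A) :
  steady w -> bifurcate w.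
Proof.
case: hA => a [b [c [ab ac bc]]] steady_w; split=> [|i i_le]; first by case: steady_w.
have [x _ x_new] :
    exists2 x, x \in [:: a; b; c] & x \notin [:: nth a w i.-1; nth a w i].
  by apply: exists_notin; rewrite //= !inE negb_or ab ac bc.
move: x_new; rewrite !inE => /norP[x_prev x_next].
exists x; apply: (square_free_of_steady_delete (x0 := a) (n := i)).
- by rewrite size_extension.
- by rewrite delete_at_extension.
- by move=> i_gt0; rewrite nth_extension // nth_extension_lt ?ltn_predL // eq_sym.
- by rewrite nth_extension // nth_extension_ge // eq_sym.
Qed.
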